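(* Let $n\ge 1$, let $\rho\in\mathbb{R}$, and let $H_n$ be the $(2n+1)$-dimensional Heisenberg group with left-invariant frame $e_1,\dots,e_{2n+1}$ as described in the context, $N=2n+1$. Let $g_0$ be a left-invariant metric on $H_n$ which is diagonal in this frame, and let $g(t)$ be a solution of the Ricci–Bourguignon flow $\frac{\partial}{\partial t}g(t)=-2\,\mathrm{Ric}(g(t))+2\rho R(g(t))g(t)$, $g(0)=g_0$, by left-invariant metrics diagonal in this frame, with components $g_I(t)=g(t)(e_I,e_I)$. Then: (a) $\frac{d}{dt}\frac{g_i(t)}{g_{i+n}(t)}=0$ for $1\le i\le n$; (b) $\frac{d}{dt}\Big(g_1(t)\cdots g_n(t)\,g_N(t)^{\frac{1-n\rho}{1+\rho}}\Big)=\frac{d}{dt}\Big(g_{1+n}(t)\cdots g_{2n}(t)\,g_N(t)^{\frac{1-n\rho}{1+\rho}}\Big)=0$; (c) if $\rho<0$ and $G_N(t)=\int_0^t g_N(r)\,dr$, then $\lim_{t\to+\infty}G_N(t)=+\infty$; (d) if moreover $g_i(0)g_{n+i}(0)=g_1(0)g_{1+n}(0)$ for all $1\le i\le n$, then the solution has the form $g_j(t)=g_j(0)(1+bt)^{\frac{1-n\rho}{n+2-n\rho}}$ for $1\le j\le 2n$, and $g_N(t)=g_N(0)(1+bt)^{\frac{n+n\rho}{n\rho-n-2}}$, where $b=(n+2-n\rho)\frac{g_N(0)}{g_1(0)g_{1+n}(0)}$.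
   Context: The Heisenberg group $H_n$ is $\mathbb{R}^{2n+1}$ with coordinates $(x,y,z)$, $x=(x^1,\dots,x^n)$, $y=(x^{n+1},\dots,x^{2n})$, $z=x^{2n+1}$, and product $(x,y,z)\circ(x',y',z')=(x+x',y+y',z+z'+x\cdot y')$, where $x\cdot y'$ is the Euclidean inner product. The left-invariant vector fields $e_i=\partial_i$, $e_{n+i}=\partial_{n+i}+x^i\partial_{2n+1}$ ($1\le i\le n$), $e_{2n+1}=\partial_{2n+1}$ form a frame whose only nonzero brackets are $[e_i,e_{n+i}]=e_{2n+1}$, $1\le i\le n$. A left-invariant metric $g$ is diagonal if $g(e_I,e_J)=0$ for $I\neq J$; write $g_I=g(e_I,e_I)$. $\mathrm{Ric}$ denotes the Ricci tensor and $R$ the scalar curvature. For diagonal left-invariant metrics the Ricci tensor is diagonal in this frame, with $\mathrm{Ric}(e_i,e_i)=-\frac{g_N}{2g_{n+i}}$, $\mathrm{Ric}(e_{n+i},e_{n+i})=-\frac{g_N}{2g_i}$, $\mathrm{Ric}(e_N,e_N)=\frac12 g_N^2\Sigma$, $R=-\frac12 g_N\Sigma$, where $\Sigma=\sum_{k=1}^n\frac{1}{g_kg_{n+k}}$; thus the flow is the ODE system $g_i'=\frac{g_N}{g_{i+n}}-\rho g_ig_N\Sigma$, $g_{i+n}'=\frac{g_N}{g_i}-\rho g_{i+n}g_N\Sigma$, $g_N'=-(1+\rho)g_N^2\Sigma$. In part (c) the solution is understood to be defined for all $t\ge 0$; in part (d) the formula is understood for $t$ with $1+bt>0$ (and $n+2-n\rho\ne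 0$). *)

From Stdlib Require Import Reals Lra Lia.
From Coquelicot Require Import Coquelicot.
Open Scope R_scope.

(* A diagonal left-invariant metric on H_n along a path is encoded by its
   components g I t = g(t)(e_I, e_I), for indices I = 1, ..., 2n+1 (N = 2n+1).
   Indices outside 1..2n+1 are irrelevant. *)

Definition idxN (n : nat) : nat := (2 * n + 1)%nat.

Definition Sigma (n : nat) (g : nat -> R -> R) (t : R) : R :=
  sum_f_R0 (fun k => / (g (S k) t * g (S k + n)%nat t)) (n - 1).

Definition RicD (n : nat) (g : nat -> R -> R) (t : R) (I : nat) : R :=
  if (I <=? n)%nat then - g (idxN n) t / (2 * g (I + n)%nat t)
  else if (I <=? 2 * n)%nat then - g (idxN n) t / (2 * g (I - n)%nat t)
  else / 2 * (g (idxN n) t) ^ 2 * Sigma n g t.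

Definition Scal (n : nat) (g : nat -> R -> R) (t : R) : R :=
  - / 2 * g (idxN n) t * Sigma n g t.

(* g is a solution on [0, T) of the Ricci–Bourguignon flow
     d/dt g = -2 Ric(g) + 2 rho R(g) g
   by diagonal left-invariant (positive definite) metrics:
   components positive on [0,T), differentiable on (0,T) satisfying the flow,
   and right-continuous at t = 0 (so that g(0) is the initial metric). *)
Definition RB_diag_solution (n : nat) (rho : R) (g : nat -> R -> R) (T : Rbar) : Prop :=
  (forall I t, (1 <= I <= idxN n)%nat -> 0 <= t -> Rbar_lt (Finite t) T -> 0 < g I t) /\
  (forall I t, (1 <= I <= idxN n)%nat -> 0 < t -> Rbar_lt (Finite t) T ->
      is_derive (g I) t (-2 * RicD n g t I + 2 * rho * Scal n g t * g I t)) /\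
  (forall I, (1 <= I <= idxN n)%nat ->
      filterlim (g I) (at_right 0) (locally (g I 0))).

From Stdlib Require Import Reals Lra Lia.
From Coquelicot Require Import Coquelicot.
Open Scope R_scope.

(* Along the flow each component has a logarithmic derivative expressed through
   the scalar curvature R = Scal n g:
     (log g_i)' = (log g_(n+i))' = g_N / (g_i g_(n+i)) + 2 rho R,   (log g_N)' = 2 (1 + rho) R,
   and (a), (b) are cancellations among these.  For (c), when rho < 0 every
   P_k = g_k g_(n+k) increases, so Sigma decreases and (1 / g_N)' = (1 + rho) Sigma is
   bounded on [1, oo); hence g_N >= 1 / (u + c (t - 1)), whose integral diverges
   logarithmically.  For (d), the differences P_k - P_1 solve a linear equation with an
   explicit integrating factor, so the balance P_k = P_1 persists; then Sigma = n / P_1,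
   P_1 / g_N grows linearly with slope n + 2 - n rho, and every logarithmic derivative
   becomes a constant multiple of b / (1 + b t), which integrates to the power laws. *)

Lemma is_derive_eq (f : R -> R) (x l l' : R) :
  is_derive f x l -> l = l' -> is_derive f x l'.
Proof. now intros H <-. Qed.

Definition right_continuous (f : R -> R) (a : R) : Prop :=
  filterlim f (at_right a) (locally (f a)).

Lemma continuous_right_continuous (f : R -> R) (a : R) :
  continuous f a -> right_continuous f a.
Proof.
  intros H. eapply filterlim_filter_le_1; [apply filter_le_within | exact H].
Qed.

Lemma right_continuous_comp (phi f : R -> R) (a : R) :
  right_continuous f a -> continuous phi (f a) ->
  right_continuous (fun s => phi (f s)) a.
Proof. intros Hf Hphi. exact (filterlim_comp _ _ _ f phi _ _ _ Hf Hphi). Qed.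

Lemma right_continuous_plus (f h : R -> R) (a : R) :
  right_continuous f a -> right_continuous h a ->
  right_continuous (fun s => f s + h s) a.
Proof.
  intros Hf Hh.
  exact (filterlim_comp_2 f h Rplus Hf Hh
           (@filterlim_plus R_AbsRing R_NormedModule (f a) (h a))).
Qed.

Lemma right_continuous_mult (f h : R -> R) (a : R) :
  right_continuous f a -> right_continuous h a ->
  right_continuous (fun s => f s * h s) a.
Proof.
  intros Hf Hh.
  exact (filterlim_comp_2 f h Rmult Hf Hh (@filterlim_mult R_AbsRing (f a) (h a))).
Qed.

Lemma right_continuous_minus (f h : R -> R) (a : R) :
  right_continuous f a -> right_continuous h a ->
  right_continuous (fun s => f s - h s) a.
Proof.
  intros Hf Hh. apply (right_continuous_plus f (fun s => - h s)); [exact Hf|].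
  apply (right_continuous_comp Ropp h); [exact Hh|].
  apply (continuous_opp (fun y : R => y)), continuous_id.
Qed.

Lemma right_continuous_div (f h : R -> R) (a : R) :
  right_continuous f a -> right_continuous h a -> h a <> 0 ->
  right_continuous (fun s => f s / h s) a.
Proof.
  intros Hf Hh Ha. apply (right_continuous_mult f (fun s => / h s)); [exact Hf|].
  apply (right_continuous_comp Rinv h); [exact Hh|]. now apply continuous_Rinv.
Qed.

Lemma right_continuous_prod (F : nat -> R -> R) (m : nat) (a : R) :
  (forall k, (k <= m)%nat -> right_continuous (F k) a) ->
  right_continuous (fun s => prod_f_R0 (fun k => F k s) m) a.
Proof.
  induction m as [|m IH]; intros HF; simpl.
  - apply HF; lia.
  - apply right_continuous_mult; [apply IH; intros k Hk|]; apply HF; lia.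
Qed.

Lemma continuous_Rpower (a x : R) : 0 < x -> continuous (fun y => Rpower y a) x.
Proof.
  intros Hx. apply (@ex_derive_continuous R_AbsRing R_NormedModule).
  eexists. apply is_derive_Reals, derivable_pt_lim_power, Hx.
Qed.

Lemma right_continuous_Rpower (f : R -> R) (a x : R) :
  right_continuous f x -> 0 < f x -> right_continuous (fun s => Rpower (f s) a) x.
Proof.
  intros Hf Hx. apply (right_continuous_comp (fun y => Rpower y a) f); [exact Hf|].
  now apply continuous_Rpower.
Qed.

Lemma sum_f_R0_pos (F : nat -> R) (m : nat) :
  (forall k, (k <= m)%nat -> 0 < F k) -> 0 < sum_f_R0 F m.
Proof.
  induction m as [|m IH]; intros HF; simpl; [apply HF; lia|].
  apply Rplus_lt_0_compat; [apply IH; intros k Hk|]; apply HF; lia.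
Qed.

Lemma prod_f_R0_pos (F : nat -> R) (m : nat) :
  (forall k, (k <= m)%nat -> 0 < F k) -> 0 < prod_f_R0 F m.
Proof.
  induction m as [|m IH]; intros HF; simpl; [apply HF; lia|].
  apply Rmult_lt_0_compat; [apply IH; intros k Hk|]; apply HF; lia.
Qed.

Lemma eq_of_derive_0 (f : R -> R) (a b : R) :
  a <= b -> (forall x, a < x <= b -> is_derive f x 0) ->
  right_continuous f a -> f b = f a.
Proof.
  intros Hab Hd Hrc. destruct (Req_dec a b) as [<-|Hne]; [reflexivity|].
  assert (Hconst : forall e, a < e <= b -> f e = f b).
  { intros e He. destruct (MVT_gen f e b (fun _ => 0)) as [c [_ Hc]].
    - intros x Hx. rewrite Rmin_left, Rmax_right in Hx by lra. apply Hd; lra.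
    - intros x Hx. rewrite Rmin_left, Rmax_right in Hx by lra.
      apply continuity_pt_filterlim, (ex_derive_continuous f).
      exists 0. apply Hd; lra.
    - lra. }
  apply (filterlim_locally_unique (F := at_right a) f); [|exact Hrc].
  apply (filterlim_ext_loc (fun _ => f b)); [|apply filterlim_const].
  exists (mkposreal (b - a) ltac:(lra)). intros y Hy Hay.
  apply Rabs_lt_between' in Hy. symmetry. apply Hconst. simpl in Hy. lra.
Qed.

Lemma le_of_derive_pos (f df : R -> R) (a b : R) :
  a <= b -> (forall x, a <= x <= b -> is_derive f x (df x)) ->
  (forall x, a <= x <= b -> 0 < df x) -> f a <= f b.
Proof.
  intros Hab Hd Hpos. destruct (Rle_lt_or_eq_dec a b Hab) as [Hlt|<-]; [|lra].
  apply Rlt_le, (incr_function_le f a b df); simpl; try lra.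
  - intros x Hax Hxb. apply Hd; lra.
  - intros x Hax Hxb. apply Rlt_gt, Hpos; lra.
Qed.

Definition is_logderive (f : R -> R) (x h : R) : Prop :=
  is_derive f x (f x * h).

Lemma is_logderive_mult (f u : R -> R) (x hf hu : R) :
  is_logderive f x hf -> is_logderive u x hu ->
  is_logderive (fun s => f s * u s) x (hf + hu).
Proof.
  intros Hf Hu. eapply is_derive_eq.
  - apply (is_derive_mult f u); [exact Hf | exact Hu | intros; apply Rmult_comm].
  - unfold plus, mult; simpl. ring.
Qed.

Lemma is_logderive_div (f u : R -> R) (x hf hu : R) :
  is_logderive f x hf -> is_logderive u x hu -> u x <> 0 ->
  is_logderive (fun s => f s / u s) x (hf - hu).
Proof.
  intros Hf Hu Hx. eapply is_derive_eq.
  - apply (is_derive_div f u); [exact Hf | exact Hu | exact Hx].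
  - field. exact Hx.
Qed.

Lemma is_logderive_Rpower (f : R -> R) (x h a : R) :
  0 < f x -> is_logderive f x h ->
  is_logderive (fun s => Rpower (f s) a) x (a * h).
Proof.
  intros Hpos Hf. unfold Rpower.
  eapply is_derive_eq.
  - apply (is_derive_comp exp (fun s => a * ln (f s))); [apply is_derive_exp|].
    apply is_derive_scal, (is_derive_comp ln f); [apply is_derive_ln, Hpos | exact Hf].
  - unfold scal; simpl; unfold mult; simpl. field. lra.
Qed.

Lemma is_logderive_prod (F : nat -> R -> R) (h : nat -> R) (x : R) (m : nat) :
  (forall k, (k <= m)%nat -> is_logderive (F k) x (h k)) ->
  is_logderive (fun s => prod_f_R0 (fun k => F k s) m) x (sum_f_R0 h m).
Proof.
  induction m as [|m IH]; intros HF; simpl.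
  - apply HF; lia.
  - apply (is_logderive_mult (fun s => prod_f_R0 (fun k => F k s) m) (F (S m))).
    + apply IH. intros k Hk. apply HF; lia.
    + apply HF; lia.
Qed.

Lemma logderive_ratio_const (f u h : R -> R) (a b : R) :
  a <= b ->
  (forall x, a < x <= b -> is_logderive f x (h x)) ->
  (forall x, a < x <= b -> is_logderive u x (h x)) ->
  (forall x, a <= x <= b -> u x <> 0) ->
  right_continuous f a -> right_continuous u a ->
  f b * u a = f a * u b.
Proof.
  intros Hab Hf Hu Hnz Hfc Huc.
  assert (E : f b / u b = f a / u a).
  { apply (eq_of_derive_0 (fun s => f s / u s)); [exact Hab| |].
    - intros x Hx. eapply is_derive_eq.
      + apply (is_logderive_div f u x (h x) (h x)); auto. apply Hnz; lra.
      + ring.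
    - apply right_continuous_div; auto. apply Hnz; lra. }
  assert (Ha : u a <> 0) by (apply Hnz; lra).
  assert (Hb : u b <> 0) by (apply Hnz; lra).
  replace (f b) with (f b / u b * u b) by (field; exact Hb).
  rewrite E. field. exact Ha.
Qed.

Lemma power_law_of_logderive (f : R -> R) (a b t : R) :
  0 <= t -> (forall s, 0 <= s <= t -> 0 < 1 + b * s) ->
  (forall s, 0 < s <= t -> is_logderive f s (a * (b / (1 + b * s)))) ->
  right_continuous f 0 -> f t = f 0 * Rpower (1 + b * t) a.
Proof.
  intros Ht Hpos Hf Hfc.
  set (u := fun s => Rpower (1 + b * s) a).
  assert (Hu : forall s, 0 <= s <= t -> is_logderive u s (a * (b / (1 + b * s)))).
  { intros s Hs. apply is_logderive_Rpower; [apply Hpos, Hs|].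
    unfold is_logderive. auto_derive; [exact I|]. field.
    apply Rgt_not_eq, Hpos, Hs. }
  assert (Hu0 : u 0 = 1).
  { unfold u, Rpower. rewrite Rmult_0_r, Rplus_0_r, ln_1, Rmult_0_r. apply exp_0. }
  transitivity (f t * u 0); [rewrite Hu0; ring|].
  apply (logderive_ratio_const f u (fun s => a * (b / (1 + b * s)))); auto.
  - intros x Hx. apply Hu; lra.
  - intros x Hx. apply Rgt_not_eq, exp_pos.
  - apply continuous_right_continuous, (@ex_derive_continuous R_AbsRing R_NormedModule).
    eexists. apply Hu; lra.
Qed.

Lemma ex_RInt_right_continuous (f : R -> R) (a b c : R) :
  a < c < b -> (forall x, a < x < b -> continuous f x) ->
  right_continuous f a -> ex_RInt f a c.
Proof.
  intros Hc Hcont Hrc.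
  destruct (C0_extension_left f (f a) a b) as [h [Hh [Heq _]]]; [lra | exact Hcont | exact Hrc|].
  apply (ex_RInt_ext h).
  - intros x Hx. rewrite Rmin_left, Rmax_right in Hx by lra. apply Heq; lra.
  - apply (@ex_RInt_continuous R_CompleteNormedModule). intros z Hz.
    rewrite Rmin_left, Rmax_right in Hz by lra. apply Hh; lra.
Qed.

Lemma is_RInt_inv_affine (u c t : R) :
  0 < u -> 0 < c -> 1 <= t ->
  is_RInt (fun s => / (u + c * (s - 1))) 1 t ((ln (u + c * (t - 1)) - ln u) / c).
Proof.
  intros Hu Hc Ht.
  assert (Hpos : forall s, 1 <= s -> 0 < u + c * (s - 1)).
  { intros s Hs. assert (0 <= c * (s - 1)) by (apply Rmult_le_pos; lra). lra. }
  replace ((ln (u + c * (t - 1)) - ln u) / c)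
    with (minus (ln (u + c * (t - 1)) / c) (ln (u + c * (1 - 1)) / c))
    by (unfold minus, plus, opp; simpl; rewrite Rminus_diag, Rmult_0_r, Rplus_0_r; field; lra).
  apply (@is_RInt_derive R_CompleteNormedModule (fun s => ln (u + c * (s - 1)) / c));
    rewrite Rmin_left, Rmax_right by lra; intros x Hx; specialize (Hpos x (proj1 Hx)).
  - auto_derive; [lra|]. field. lra.
  - apply (@ex_derive_continuous R_AbsRing R_NormedModule). auto_derive. lra.
Qed.

Lemma is_lim_RInt_p_infty (f : R -> R) (u c : R) :
  0 < u -> 0 < c -> ex_RInt f 0 1 -> (forall s, 1 <= s -> continuous f s) ->
  (forall s, 1 <= s -> / (u + c * (s - 1)) <= f s) ->
  is_lim (fun t => RInt f 0 t) p_infty p_infty.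
Proof.
  intros Hu Hc H01 Hcont Hlow.
  apply is_lim_spec. intros M.
  set (E := exp (c * (M - RInt f 0 1) + ln u)).
  exists (1 + E / c). intros t Ht.
  assert (HE : 0 < E / c) by (apply Rdiv_lt_0_compat; [apply exp_pos | exact Hc]).
  assert (H1t : ex_RInt f 1 t).
  { apply (@ex_RInt_continuous R_CompleteNormedModule). intros z Hz.
    rewrite Rmin_left, Rmax_right in Hz by lra. apply Hcont; lra. }
  rewrite <- (RInt_Chasles f 0 1 t H01 H1t). unfold plus; simpl.
  assert (Hint : (ln (u + c * (t - 1)) - ln u) / c <= RInt f 1 t).
  { rewrite <- (is_RInt_unique _ _ _ _ (is_RInt_inv_affine u c t Hu Hc ltac:(lra))).
    apply RInt_le; [lra| eexists; apply is_RInt_inv_affine; lra | exact H1t |].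
    intros x Hx. apply Hlow; lra. }
  assert (Hln : c * (M - RInt f 0 1) + ln u < ln (u + c * (t - 1))).
  { rewrite <- (ln_exp (c * (M - RInt f 0 1) + ln u)). fold E. apply ln_increasing.
    - apply exp_pos.
    - assert (E < c * (t - 1)).
      { replace E with (c * (E / c)) by (field; lra). apply Rmult_lt_compat_l; lra. }
      lra. }
  apply (Rmult_lt_compat_r (/ c)) in Hln; [|apply Rinv_0_lt_compat, Hc].
  replace ((c * (M - RInt f 0 1) + ln u) * / c) with (M - RInt f 0 1 + ln u / c) in Hln
    by (field; lra).
  unfold Rdiv in Hint. lra.
Qed.

Definition pair_prod (n : nat) (g : nat -> R -> R) (k : nat) (t : R) : R :=
  g k t * g (k + n)%nat t.

(* (g_1 ... g_n) g_N^(-n) has logarithmic derivative -2 (n + 1) R along the flow, so this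
   power of it has logarithmic derivative 4 rho R, the same as every difference P_k - P_l. *)
Definition balance_factor (n : nat) (rho : R) (g : nat -> R -> R) (t : R) : R :=
  Rpower (prod_f_R0 (fun k => g (S k) t) (n - 1)) (-2 * rho / (INR n + 1))
  * Rpower (g (idxN n) t) (2 * INR n * rho / (INR n + 1)).

Lemma balance_factor_pos (n : nat) (rho : R) (g : nat -> R -> R) (t : R) :
  0 < balance_factor n rho g t.
Proof. apply Rmult_lt_0_compat; apply exp_pos. Qed.

Section RicciBourguignonFlow.

Variables (n : nat) (rho : R) (g : nat -> R -> R) (T : Rbar).
Hypotheses (Hn : (1 <= n)%nat) (Hsol : RB_diag_solution n rho g T).

Lemma flow_pos (I : nat) (t : R) :
  (1 <= I <= idxN n)%nat -> 0 <= t -> Rbar_lt t T -> 0 < g I t.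
Proof. destruct Hsol as [Hpos _]. apply Hpos. Qed.

Lemma flow_right_continuous (I : nat) :
  (1 <= I <= idxN n)%nat -> right_continuous (g I) 0.
Proof. destruct Hsol as [_ [_ Hrc]]. apply Hrc. Qed.

Lemma flow_logderive_low (i : nat) (t : R) :
  (1 <= i <= n)%nat -> 0 < t -> Rbar_lt t T ->
  is_logderive (g i) t (g (idxN n) t / pair_prod n g i t + 2 * rho * Scal n g t).
Proof.
  intros Hi Ht HT. destruct Hsol as [Hpos [Hder _]].
  assert (0 < g i t) by (apply Hpos; [unfold idxN; lia | lra | exact HT]).
  assert (0 < g (i + n)%nat t) by (apply Hpos; [unfold idxN; lia | lra | exact HT]).
  eapply is_derive_eq; [apply Hder; [unfold idxN; lia | exact Ht | exact HT]|].
  unfold RicD, pair_prod. rewrite (proj2 (Nat.leb_le i n)) by lia. field. lra.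
Qed.

Lemma flow_logderive_high (i : nat) (t : R) :
  (1 <= i <= n)%nat -> 0 < t -> Rbar_lt t T ->
  is_logderive (g (i + n)%nat) t (g (idxN n) t / pair_prod n g i t + 2 * rho * Scal n g t).
Proof.
  intros Hi Ht HT. destruct Hsol as [Hpos [Hder _]].
  assert (0 < g i t) by (apply Hpos; [unfold idxN; lia | lra | exact HT]).
  assert (0 < g (i + n)%nat t) by (apply Hpos; [unfold idxN; lia | lra | exact HT]).
  eapply is_derive_eq; [apply Hder; [unfold idxN; lia | exact Ht | exact HT]|].
  unfold RicD, pair_prod.
  rewrite (proj2 (Nat.leb_gt (i + n) n)), (proj2 (Nat.leb_le (i + n) (2 * n))) by lia.
  replace (i + n - n)%nat with i by lia. field. lra.
Qed.

Lemma flow_logderive_N (t : R) :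
  0 < t -> Rbar_lt t T -> is_logderive (g (idxN n)) t (2 * (1 + rho) * Scal n g t).
Proof.
  intros Ht HT. destruct Hsol as [_ [Hder _]].
  eapply is_derive_eq; [apply Hder; [unfold idxN; lia | exact Ht | exact HT]|].
  unfold RicD, Scal, idxN.
  rewrite (proj2 (Nat.leb_gt (2 * n + 1) n)), (proj2 (Nat.leb_gt (2 * n + 1) (2 * n))) by lia.
  ring.
Qed.

Lemma sum_logderive_low (t : R) :
  sum_f_R0 (fun k => g (idxN n) t / pair_prod n g (S k) t + 2 * rho * Scal n g t) (n - 1)
  = -2 * (1 - INR n * rho) * Scal n g t.
Proof.
  rewrite sum_plus, sum_cte. replace (S (n - 1)) with n by lia.
  rewrite (sum_eq _ (fun k => / (g (S k) t * g (S k + n)%nat t) * g (idxN n) t)).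
  rewrite <- scal_sum. unfold Scal, Sigma. field.
  intros; unfold pair_prod, Rdiv; ring.
Qed.

Lemma flow_logderive_prod_low (t : R) :
  0 < t -> Rbar_lt t T ->
  is_logderive (fun s => prod_f_R0 (fun k => g (S k) s) (n - 1)) t
    (-2 * (1 - INR n * rho) * Scal n g t).
Proof.
  intros Ht HT. rewrite <- sum_logderive_low.
  apply (is_logderive_prod (fun k => g (S k))). intros k Hk.
  apply flow_logderive_low; auto. lia.
Qed.

Lemma flow_logderive_prod_high (t : R) :
  0 < t -> Rbar_lt t T ->
  is_logderive (fun s => prod_f_R0 (fun k => g (S k + n)%nat s) (n - 1)) t
    (-2 * (1 - INR n * rho) * Scal n g t).
Proof.
  intros Ht HT. rewrite <- sum_logderive_low.
  apply (is_logderive_prod (fun k => g (S k + n)%nat)). intros k Hk.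
  apply flow_logderive_high; auto. lia.
Qed.

Lemma flow_derive_pair_prod (k : nat) (t : R) :
  (1 <= k <= n)%nat -> 0 < t -> Rbar_lt t T ->
  is_derive (pair_prod n g k) t
    (2 * g (idxN n) t + 4 * rho * Scal n g t * pair_prod n g k t).
Proof.
  intros Hk Ht HT.
  assert (0 < g k t) by (apply flow_pos; solve [unfold idxN; lia | lra | exact HT]).
  assert (0 < g (k + n)%nat t) by (apply flow_pos; solve [unfold idxN; lia | lra | exact HT]).
  eapply is_derive_eq.
  - apply (is_logderive_mult (g k) (g (k + n)%nat));
      [apply flow_logderive_low | apply flow_logderive_high]; auto.
  - unfold pair_prod. field. split; lra.
Qed.

Lemma flow_ratio_derive_0 (i : nat) (t : R) :
  (1 <= i <= n)%nat -> 0 < t -> Rbar_lt t T ->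
  is_derive (fun s => g i s / g (i + n)%nat s) t 0.
Proof.
  intros Hi Ht HT. eapply is_derive_eq.
  - apply is_logderive_div;
      [apply flow_logderive_low | apply flow_logderive_high | apply Rgt_not_eq, flow_pos];
      solve [auto | unfold idxN; lia | lra].
  - ring.
Qed.

Lemma flow_conserved_with_N (Pi : R -> R) (t : R) :
  1 + rho <> 0 -> 0 < t -> Rbar_lt t T ->
  is_logderive Pi t (-2 * (1 - INR n * rho) * Scal n g t) ->
  is_derive (fun s => Pi s * Rpower (g (idxN n) s) ((1 - INR n * rho) / (1 + rho))) t 0.
Proof.
  intros Hrho Ht HT HPi. eapply is_derive_eq.
  - apply (is_logderive_mult Pi); [exact HPi|].
    apply is_logderive_Rpower; [apply flow_pos; solve [unfold idxN; lia | lra | exact HT]|].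
    apply flow_logderive_N; auto.
  - field. exact Hrho.
Qed.

Lemma Sigma_pos (t : R) : 0 <= t -> Rbar_lt t T -> 0 < Sigma n g t.
Proof.
  intros Ht HT. apply sum_f_R0_pos. intros k Hk.
  apply Rinv_0_lt_compat, Rmult_lt_0_compat; apply flow_pos;
    solve [unfold idxN; lia | lra | exact HT].
Qed.

Lemma Scal_neg (t : R) : 0 <= t -> Rbar_lt t T -> Scal n g t < 0.
Proof.
  intros Ht HT. unfold Scal.
  assert (0 < g (idxN n) t) by (apply flow_pos; solve [unfold idxN; lia | lra | exact HT]).
  assert (0 < Sigma n g t) by (apply Sigma_pos; assumption).
  assert (0 < g (idxN n) t * Sigma n g t) by (apply Rmult_lt_0_compat; assumption).
  lra.
Qed.

Lemma flow_logderive_pair_prod_sub (k l : nat) (t : R) :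
  (1 <= k <= n)%nat -> (1 <= l <= n)%nat -> 0 < t -> Rbar_lt t T ->
  is_logderive (fun s => pair_prod n g k s - pair_prod n g l s) t (4 * rho * Scal n g t).
Proof.
  intros Hk Hl Ht HT. eapply is_derive_eq.
  - apply (is_derive_minus (pair_prod n g k) (pair_prod n g l));
      apply flow_derive_pair_prod; assumption.
  - unfold minus, plus, opp; simpl. ring.
Qed.

Lemma flow_logderive_balance_factor (t : R) :
  0 < t -> Rbar_lt t T ->
  is_logderive (balance_factor n rho g) t (4 * rho * Scal n g t).
Proof.
  intros Ht HT. eapply is_derive_eq.
  - apply is_logderive_mult; apply is_logderive_Rpower;
      solve [ apply prod_f_R0_pos; intros k Hk; apply flow_pos;
                solve [unfold idxN; lia | lra | exact HT]
            | apply flow_pos; solve [unfold idxN; lia | lra | exact HT]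
            | apply flow_logderive_prod_low; assumption
            | apply flow_logderive_N; assumption ].
  - unfold balance_factor. pose proof (pos_INR n). field. lra.
Qed.

Lemma balance_factor_right_continuous :
  Rbar_lt 0 T -> right_continuous (balance_factor n rho g) 0.
Proof.
  intros H0T. apply right_continuous_mult; apply right_continuous_Rpower.
  - apply right_continuous_prod. intros k Hk. apply flow_right_continuous. unfold idxN; lia.
  - apply prod_f_R0_pos. intros k Hk. apply flow_pos; solve [unfold idxN; lia | lra | exact H0T].
  - apply flow_right_continuous. unfold idxN; lia.
  - apply flow_pos; solve [unfold idxN; lia | lra | exact H0T].
Qed.

Section NegativeRho.

Hypothesis Hrho : rho < 0.

Lemma pair_prod_monotone (k : nat) (s s' : R) :
  (1 <= k <= n)%nat -> 0 < s <= s' -> Rbar_lt s' T ->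
  pair_prod n g k s <= pair_prod n g k s'.
Proof.
  intros Hk Hs HT.
  assert (HxT : forall x, x <= s' -> Rbar_lt x T)
    by (intros x Hx; apply (Rbar_le_lt_trans x s'); [exact Hx | exact HT]).
  apply (le_of_derive_pos _ (fun x => 2 * g (idxN n) x + 4 * rho * Scal n g x * pair_prod n g k x));
    [lra | intros x Hx; apply flow_derive_pair_prod; [exact Hk | lra | apply HxT; lra] |].
  intros x Hx. specialize (HxT x (proj2 Hx)).
  assert (0 < g (idxN n) x) by (apply flow_pos; solve [unfold idxN; lia | lra | exact HxT]).
  assert (0 < pair_prod n g k x)
    by (apply Rmult_lt_0_compat; apply flow_pos; solve [unfold idxN; lia | lra | exact HxT]).
  assert (Scal n g x < 0) by (apply Scal_neg; [lra | exact HxT]).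
  assert (0 < rho * Scal n g x * pair_prod n g k x)
    by (apply Rmult_lt_0_compat; [nra | assumption]).
  lra.
Qed.

Lemma Sigma_antitone (s s' : R) :
  0 < s <= s' -> Rbar_lt s' T -> Sigma n g s' <= Sigma n g s.
Proof.
  intros Hs HT. apply sum_Rle. intros k Hk. apply Rinv_le_contravar.
  - apply Rmult_lt_0_compat; apply flow_pos;
      solve [unfold idxN; lia | lra | apply (Rbar_le_lt_trans s s'); [simpl; lra | exact HT]].
  - apply (pair_prod_monotone (S k)); auto. lia.
Qed.

Lemma inv_N_le_affine :
  Rbar_lt 1 T ->
  exists c, 0 < c /\
    forall s, 1 <= s -> Rbar_lt s T -> / g (idxN n) s <= / g (idxN n) 1 + c * (s - 1).
Proof.
  intros H1T.
  set (c := Rabs (1 + rho) * Sigma n g 1 + 1).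
  assert (HS1 : 0 < Sigma n g 1) by (apply Sigma_pos; [lra | exact H1T]).
  exists c. split.
  { unfold c. pose proof (Rmult_le_pos _ _ (Rabs_pos (1 + rho)) (Rlt_le _ _ HS1)). lra. }
  intros s Hs HT.
  assert (HxT : forall x, x <= s -> Rbar_lt x T)
    by (intros x Hx; apply (Rbar_le_lt_trans x s); [exact Hx | exact HT]).
  cut (c * 1 - / g (idxN n) 1 <= c * s - / g (idxN n) s); [lra|].
  apply (le_of_derive_pos (fun x => c * x - / g (idxN n) x)
           (fun x => c - (1 + rho) * Sigma n g x)); [exact Hs| |].
  - intros x Hx. specialize (HxT x (proj2 Hx)).
    assert (0 < g (idxN n) x) by (apply flow_pos; solve [unfold idxN; lia | lra | exact HxT]).
    eapply is_derive_eq.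
    + apply (is_derive_minus (fun x => c * x) (fun x => / g (idxN n) x)).
      * apply (is_derive_scal (fun x => x)), is_derive_id.
      * apply is_derive_inv; [apply flow_logderive_N; [lra | exact HxT] | lra].
    + unfold minus, plus, opp, mult, one, Scal; simpl. field. lra.
  - intros x Hx. specialize (HxT x (proj2 Hx)).
    assert (Sigma n g x <= Sigma n g 1) by (apply Sigma_antitone; [lra | exact HxT]).
    assert (0 < Sigma n g x) by (apply Sigma_pos; [lra | exact HxT]).
    assert ((1 + rho) * Sigma n g x <= Rabs (1 + rho) * Sigma n g x)
      by (apply Rmult_le_compat_r; [lra | apply Rle_abs]).
    assert (Rabs (1 + rho) * Sigma n g x <= Rabs (1 + rho) * Sigma n g 1)
      by (apply Rmult_le_compat_l; [apply Rabs_pos | assumption]).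
    unfold c. lra.
Qed.

Lemma flow_RInt_N_p_infty :
  T = p_infty -> is_lim (fun t => RInt (g (idxN n)) 0 t) p_infty p_infty.
Proof.
  intros HT. assert (HxT : forall x : R, Rbar_lt x T) by (intros; rewrite HT; exact I).
  assert (Hcont : forall x, 0 < x -> continuous (g (idxN n)) x).
  { intros x Hx. apply (@ex_derive_continuous R_AbsRing R_NormedModule).
    eexists. apply flow_logderive_N; [exact Hx | apply HxT]. }
  destruct inv_N_le_affine as [c [Hc Hbound]]; [apply HxT|].
  apply (is_lim_RInt_p_infty _ (/ g (idxN n) 1) c).
  - apply Rinv_0_lt_compat, flow_pos; solve [unfold idxN; lia | lra | apply HxT].
  - exact Hc.
  - apply (ex_RInt_right_continuous _ 0 2 1); [lra | intros x Hx; apply Hcont; lra |].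
    apply flow_right_continuous. unfold idxN; lia.
  - intros s Hs. apply Hcont. lra.
  - intros s Hs.
    assert (0 < g (idxN n) s) by (apply flow_pos; solve [unfold idxN; lia | lra | apply HxT]).
    rewrite <- (Rinv_inv (g (idxN n) s)).
    apply Rinv_le_contravar; [apply Rinv_0_lt_compat; lra | apply Hbound; [exact Hs | apply HxT]].
Qed.

End NegativeRho.

Section BalancedInitialMetric.

Hypothesis Hbal : forall k, (1 <= k <= n)%nat -> pair_prod n g k 0 = pair_prod n g 1 0.

Lemma pair_prod_balanced (k : nat) (s : R) :
  (1 <= k <= n)%nat -> 0 <= s -> Rbar_lt s T -> pair_prod n g k s = pair_prod n g 1 s.
Proof.
  intros Hk Hs HT.
  assert (H0T : Rbar_lt 0 T) by exact (Rbar_le_lt_trans 0 s T Hs HT).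
  set (D := fun x => pair_prod n g k x - pair_prod n g 1 x).
  assert (E : D s * balance_factor n rho g 0 = D 0 * balance_factor n rho g s).
  { apply (logderive_ratio_const D _ (fun x => 4 * rho * Scal n g x)); [exact Hs | | | | |].
    - intros x Hx. apply flow_logderive_pair_prod_sub; [exact Hk | lia | lra |].
      apply (Rbar_le_lt_trans x s); [apply Hx | exact HT].
    - intros x Hx. apply flow_logderive_balance_factor; [lra|].
      apply (Rbar_le_lt_trans x s); [apply Hx | exact HT].
    - intros x _. apply Rgt_not_eq, balance_factor_pos.
    - apply right_continuous_minus; apply right_continuous_mult;
        apply flow_right_continuous; unfold idxN; lia.
    - apply balance_factor_right_continuous, H0T. }
  assert (HD0 : D 0 = 0) by (unfold D; rewrite Hbal by exact Hk; ring).
  rewrite HD0, Rmult_0_l in E.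
  apply Rmult_integral in E as [E | E]; [unfold D in E; lra|].
  pose proof (balance_factor_pos n rho g 0). lra.
Qed.

Lemma Scal_balanced (s : R) :
  0 <= s -> Rbar_lt s T ->
  Scal n g s = - INR n * g (idxN n) s / (2 * pair_prod n g 1 s).
Proof.
  intros Hs HT.
  assert (0 < pair_prod n g 1 s)
    by (apply Rmult_lt_0_compat; apply flow_pos; solve [unfold idxN; lia | lra | exact HT]).
  unfold Scal, Sigma.
  rewrite (sum_eq _ (fun _ => / pair_prod n g 1 s)).
  - rewrite sum_cte. replace (S (n - 1)) with n by lia. field. lra.
  - intros k Hk. fold (pair_prod n g (S k) s). rewrite pair_prod_balanced; auto. lia.
Qed.

Lemma pair_prod_div_N_affine (s : R) :
  0 <= s -> Rbar_lt s T ->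
  pair_prod n g 1 s / g (idxN n) s
  = pair_prod n g 1 0 / g (idxN n) 0 + (INR n + 2 - INR n * rho) * s.
Proof.
  intros Hs HT.
  assert (HxT : forall x, x <= s -> Rbar_lt x T)
    by (intros x Hx; apply (Rbar_le_lt_trans x s); [exact Hx | exact HT]).
  set (D := INR n + 2 - INR n * rho).
  cut (pair_prod n g 1 s / g (idxN n) s - D * s
       = pair_prod n g 1 0 / g (idxN n) 0 - D * 0); [lra|].
  apply (eq_of_derive_0 (fun x => pair_prod n g 1 x / g (idxN n) x - D * x)); [exact Hs| |].
  - intros x Hx. specialize (HxT x (proj2 Hx)).
    assert (0 < g (idxN n) x) by (apply flow_pos; solve [unfold idxN; lia | lra | exact HxT]).
    assert (0 < pair_prod n g 1 x)
      by (apply Rmult_lt_0_compat; apply flow_pos; solve [unfold idxN; lia | lra | exact HxT]).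
    eapply is_derive_eq.
    + apply (is_derive_minus (fun x => pair_prod n g 1 x / g (idxN n) x) (fun x => D * x)).
      * apply is_derive_div; [apply flow_derive_pair_prod | apply flow_logderive_N | lra];
          solve [lia | lra | exact HxT].
      * apply (is_derive_scal (fun x => x)), is_derive_id.
    + rewrite Scal_balanced by (lra || exact HxT).
      unfold minus, plus, opp, mult, one, D; simpl. field. lra.
  - apply right_continuous_minus.
    + apply right_continuous_div; [apply right_continuous_mult | |];
        try (apply flow_right_continuous; unfold idxN; lia).
      apply Rgt_not_eq, flow_pos; solve [unfold idxN; lia | lra | apply HxT; lra].
    + apply continuous_right_continuous, (@ex_derive_continuous R_AbsRing R_NormedModule).
      eexists. apply (is_derive_scal (fun x => x)), is_derive_id.
Qed.

Lemma one_add_rate_mul (s : R) :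
  0 <= s -> Rbar_lt s T ->
  1 + (INR n + 2 - INR n * rho) * g (idxN n) 0 / pair_prod n g 1 0 * s
  = g (idxN n) 0 / pair_prod n g 1 0 * (pair_prod n g 1 s / g (idxN n) s).
Proof.
  intros Hs HT. rewrite pair_prod_div_N_affine by assumption.
  assert (H0T : Rbar_lt 0 T) by exact (Rbar_le_lt_trans 0 s T Hs HT).
  assert (0 < g (idxN n) 0) by (apply flow_pos; [unfold idxN; lia | lra | exact H0T]).
  assert (0 < pair_prod n g 1 0)
    by (apply Rmult_lt_0_compat; apply flow_pos; solve [unfold idxN; lia | lra | exact H0T]).
  field. lra.
Qed.

Lemma flow_logderive_balanced (j : nat) (s : R) :
  (1 <= j <= 2 * n)%nat -> 0 < s -> Rbar_lt s T ->
  is_logderive (g j) s ((1 - INR n * rho) * (g (idxN n) s / pair_prod n g 1 s)).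
Proof.
  intros Hj Hs HT.
  assert (0 < pair_prod n g 1 s)
    by (apply Rmult_lt_0_compat; apply flow_pos; solve [unfold idxN; lia | lra | exact HT]).
  destruct (Nat.le_gt_cases j n) as [Hjn | Hjn].
  - eapply is_derive_eq; [apply flow_logderive_low; [lia | exact Hs | exact HT]|].
    rewrite pair_prod_balanced, Scal_balanced by (lia || lra || exact HT). field. lra.
  - replace j with (j - n + n)%nat by lia.
    eapply is_derive_eq; [apply flow_logderive_high; [lia | exact Hs | exact HT]|].
    rewrite pair_prod_balanced, Scal_balanced by (lia || lra || exact HT). field. lra.
Qed.

Lemma flow_logderive_N_balanced (s : R) :
  0 < s -> Rbar_lt s T ->
  is_logderive (g (idxN n)) s (- (1 + rho) * INR n * (g (idxN n) s / pair_prod n g 1 s)).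
Proof.
  intros Hs HT.
  assert (0 < pair_prod n g 1 s)
    by (apply Rmult_lt_0_compat; apply flow_pos; solve [unfold idxN; lia | lra | exact HT]).
  eapply is_derive_eq; [apply flow_logderive_N; assumption|].
  rewrite Scal_balanced by (lra || exact HT). field. lra.
Qed.

Lemma flow_power_law (t : R) :
  INR n + 2 - INR n * rho <> 0 -> 0 <= t -> Rbar_lt t T ->
  let b := (INR n + 2 - INR n * rho) * g (idxN n) 0 / pair_prod n g 1 0 in
  (forall j, (1 <= j <= 2 * n)%nat ->
     g j t = g j 0 * Rpower (1 + b * t) ((1 - INR n * rho) / (INR n + 2 - INR n * rho))) /\
  g (idxN n) t = g (idxN n) 0
     * Rpower (1 + b * t) ((INR n + INR n * rho) / (INR n * rho - INR n - 2)).
Proof.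
  intros HD Ht HT b.
  assert (HxT : forall x, x <= t -> Rbar_lt x T)
    by (intros x Hx; apply (Rbar_le_lt_trans x t); [exact Hx | exact HT]).
  assert (HgN : forall x, 0 <= x <= t -> 0 < g (idxN n) x)
    by (intros x Hx; apply flow_pos; [unfold idxN; lia | lra | apply HxT; lra]).
  assert (HP : forall x, 0 <= x <= t -> 0 < pair_prod n g 1 x)
    by (intros x Hx; apply Rmult_lt_0_compat; apply flow_pos;
        solve [unfold idxN; lia | lra | apply HxT; lra]).
  assert (Hrate : forall x, 0 <= x <= t ->
            1 + b * x = g (idxN n) 0 / pair_prod n g 1 0 * (pair_prod n g 1 x / g (idxN n) x))
    by (intros x Hx; apply one_add_rate_mul; [lra | apply HxT; lra]).
  assert (H1b : forall x, 0 <= x <= t -> 0 < 1 + b * x).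
  { intros x Hx. rewrite Hrate by exact Hx.
    apply Rmult_lt_0_compat; apply Rdiv_lt_0_compat; apply HgN || apply HP; lra. }
  assert (Hb : forall x, 0 <= x <= t ->
            g (idxN n) x / pair_prod n g 1 x = b / (INR n + 2 - INR n * rho) / (1 + b * x)).
  { intros x Hx. rewrite Hrate by exact Hx. unfold b.
    pose proof (HgN x Hx). pose proof (HgN 0 ltac:(lra)).
    pose proof (HP x Hx). pose proof (HP 0 ltac:(lra)).
    field. repeat split; lra. }
  split.
  - intros j Hj. apply power_law_of_logderive; [exact Ht | exact H1b | |].
    + intros x Hx. eapply is_derive_eq.
      { apply flow_logderive_balanced; [exact Hj | lra | apply HxT; lra]. }
      rewrite Hb by lra. field. split; [apply Rgt_not_eq, H1b; lra | exact HD].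
    + apply flow_right_continuous. unfold idxN; lia.
  - apply power_law_of_logderive; [exact Ht | exact H1b | |].
    + intros x Hx. eapply is_derive_eq.
      { apply flow_logderive_N_balanced; [lra | apply HxT; lra]. }
      rewrite Hb by lra. field.
      repeat split; [apply Rgt_not_eq, H1b; lra | lra | exact HD].
    + apply flow_right_continuous. unfold idxN; lia.
Qed.

End BalancedInitialMetric.

End RicciBourguignonFlow.

Theorem theorem2p4 (n : nat) (rho : R) (g : nat -> R -> R) (T : Rbar) :
  (1 <= n)%nat ->
  Rbar_lt (Finite 0) T ->
  RB_diag_solution n rho g T ->
  (* (a) *)
  (forall i t, (1 <= i <= n)%nat -> 0 < t -> Rbar_lt (Finite t) T ->
     is_derive (fun s => g i s / g (i + n)%nat s) t 0) /\
  (* (b) (the exponent requires 1 + rho <> 0) *)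
  (1 + rho <> 0 ->
   forall t, 0 < t -> Rbar_lt (Finite t) T ->
     is_derive (fun s => prod_f_R0 (fun k => g (S k) s) (n - 1)
                         * Rpower (g (idxN n) s) ((1 - INR n * rho) / (1 + rho))) t 0 /\
     is_derive (fun s => prod_f_R0 (fun k => g (S k + n)%nat s) (n - 1)
                         * Rpower (g (idxN n) s) ((1 - INR n * rho) / (1 + rho))) t 0) /\
  (* (c) *)
  (rho < 0 -> T = p_infty ->
     is_lim (fun t => RInt (g (idxN n)) 0 t) p_infty p_infty) /\
  (* (d) *)
  ((forall i, (1 <= i <= n)%nat -> g i 0 * g (n + i)%nat 0 = g 1%nat 0 * g (1 + n)%nat 0) ->
   INR n + 2 - INR n * rho <> 0 ->
   let b := (INR n + 2 - INR n * rho) * g (idxN n) 0 / (g 1%nat 0 * g (1 + n)%nat 0) in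
   forall t, 0 <= t -> Rbar_lt (Finite t) T -> 0 < 1 + b * t ->
     (forall j, (1 <= j <= 2 * n)%nat ->
        g j t = g j 0 * Rpower (1 + b * t) ((1 - INR n * rho) / (INR n + 2 - INR n * rho))) /\
     g (idxN n) t = g (idxN n) 0
        * Rpower (1 + b * t) ((INR n + INR n * rho) / (INR n * rho - INR n - 2))).
Proof.
  intros Hn _ Hsol. split; [|split; [|split]].
  - exact (flow_ratio_derive_0 n rho g T Hn Hsol).
  - intros Hrho t Ht HT.
    split; apply (flow_conserved_with_N n rho g T Hn Hsol); try assumption.
    + exact (flow_logderive_prod_low n rho g T Hn Hsol t Ht HT).
    + exact (flow_logderive_prod_high n rho g T Hn Hsol t Ht HT).
  - exact (flow_RInt_N_p_infty n rho g T Hn Hsol).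
  - (* 0 < 1 + b t need not be assumed: it follows from the flow (one_add_rate_mul). *)
    intros Hbal HD b t Ht HT _.
    apply (flow_power_law n rho g T Hn Hsol); try assumption.
    intros k Hk. unfold pair_prod. rewrite Nat.add_comm. exact (Hbal k Hk).
Qed.
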